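(* Let $\lambda\neq 0$ and $F(t)=F(t;\lambda)=\frac{1}{(1+t)^{\lambda}+1}$. Then for every positive integer $N$, $$\left(\frac{d}{dt}\right)^N F(t)=\frac{(-1)^N\lambda}{(1+t)^N}\sum_{i=1}^{N+1}a_{i-1}(N;\lambda)F(t)^i,$$ where $a_0(N;\lambda)=(N+\lambda-1)_{N-1}$, $a_N(N;\lambda)=(-1)^N\lambda^{N-1}N!$, and for $1\le j\le N-1$, $$a_j(N;\lambda)=(-1)^j j!\,\lambda^j\sum_{i_j=0}^{N-j}\sum_{i_{j-1}=0}^{N-j-i_j}\cdots\sum_{i_1=0}^{N-j-i_j-\cdots-i_2}\ \prod_{\ell=1}^{j}\Bigl(N+(\ell+1)\lambda-(i_j+\cdots+i_{\ell+1})-(j-\ell)-1\Bigr)_{i_\ell}\cdot\Bigl(N+\lambda-S-j-1\Bigr)_{N-S-j-1},$$ with $S=i_1+\cdots+i_j$ (the empty sum $i_j+\cdots+i_{j+1}$ being $0$). Explicitly, the product is $(N+(j+1)\lambda-1)_{i_j}(N+j\lambda-i_j-2)_{i_{j-1}}\cdots(N+2\lambda-i_j-\cdots-i_2-j)_{i_1}$.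
   Context: $(x)_n=x(x-1)\cdots(x-n+1)$ for $n\ge1$, $(x)_0=1$, and, for the boundary terms where the index equals $-1$, $(x)_{-1}=\frac{1}{x+1}$ (so that e.g. $(\lambda-1)_{-1}=1/\lambda$). *)

From Stdlib Require Import Reals ZArith List.
From Coquelicot Require Import Coquelicot.
Open Scope R_scope.

(* F(t; lambda) = 1 / ((1+t)^lambda + 1), meaningful for t > -1. *)
Definition F (lam t : R) : R := / (Rpower (1 + t) lam + 1).

Fixpoint ffn (x : R) (n : nat) : R :=
  match n with
  | O => 1
  | S n' => ffn x n' * (x - INR n')
  end.

(* falling factorial with integer index; (x)_{-1} = 1/(x+1).
   Only the indices >= -1 occur in the statement. *)
Definition ffz (x : R) (k : Z) : R :=
  if (k <? 0)%Z then / (x + 1) else ffn x (Z.to_nat k).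

Fixpoint prod1 (n : nat) (f : nat -> R) : R :=
  match n with
  | O => 1
  | S n' => prod1 n' f * f n
  end.

(* Nested sum: nsum k b f =
   sum_{x_1=0}^{b} sum_{x_2=0}^{b-x_1} ... sum_{x_k=0}^{b-x_1-...-x_{k-1}} f [x_1;...;x_k].
   In a_j, x_1 = i_j (outermost), ..., x_j = i_1 (innermost). *)
Fixpoint nsum (k : nat) (b : nat) (f : list nat -> R) : R :=
  match k with
  | O => f nil
  | S k' => sum_n (fun i => nsum k' (b - i) (fun l => f (i :: l))) b
  end.

Fixpoint lsum (l : list nat) : nat :=
  match l with nil => O | x :: l' => (x + lsum l')%nat end.

(* summand of a_j for index list l = [i_j; i_{j-1}; ...; i_1] *)
Definition aterm (N j : nat) (lam : R) (l : list nat) : R :=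
  let i := fun ell : nat => nth (j - ell) l O in
  let tail := fun ell : nat => lsum (firstn (j - ell) l) in (* i_j+...+i_{ell+1} *)
  let S := lsum l in
  prod1 j (fun ell =>
     ffn (INR N + INR (ell + 1) * lam - INR (tail ell) - INR (j - ell) - 1) (i ell))
  * ffz (INR N + lam - INR S - INR j - 1)
        (Z.of_nat N - Z.of_nat S - Z.of_nat j - 1)%Z.

Definition a (j N : nat) (lam : R) : R :=
  if Nat.eqb j 0 then ffn (INR N + lam - 1) (N - 1)
  else if Nat.eqb j N then (-1) ^ N * lam ^ (N - 1) * INR (fact N)
  else (-1) ^ j * INR (fact j) * lam ^ j * nsum j (N - j) (aterm N j lam).

(** Since (1+t)^λ = 1/F - 1, the derivative is F' = -λ/(1+t) (F - F²).
    Hence by induction D^N F = (-1)^N λ (1+t)^(-N) Σ_k c_N(k) F^(k+1), and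
    differentiating once more gives the coefficient recurrence
    c_(N+1)(k) = (N + (k+1)λ) c_N(k) - kλ c_N(k-1).
    Writing c_N(k) = (-1)^k k! λ^k A_k(N), with A_k(N) the nested sum in a_k
    ([asum]), this becomes A_k(N+1) = (N + (k+1)λ) A_k(N) + A_(k-1)(N), which
    follows by splitting off the outermost index and using
    (x+1)_(i+1) = (x+1) (x)_i. *)

From Stdlib Require Import Reals ZArith List Lia Lra.
From Coquelicot Require Import Coquelicot.
Open Scope R_scope.

Lemma is_derive_F lam t : -1 < t ->
  is_derive (F lam) t (- lam / (1 + t) * (F lam t - F lam t ^ 2)).
Proof.
  intro Ht. unfold F, Rpower.
  assert (0 < exp (lam * ln (1 + t))) by apply exp_pos.
  auto_derive.
  - repeat split; lra.
  - field. split; lra.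
Qed.

Lemma is_derive_inv_pow N t : -1 < t ->
  is_derive (fun y => (/ (1 + y)) ^ N) t (- INR N * (/ (1 + t)) ^ S N).
Proof.
  intro Ht. auto_derive.
  - lra.
  - destruct N; simpl; field; lra.
Qed.

Fixpoint hpoly (c : nat -> R) (m : nat) (x : R) : R :=
  match m with
  | O => c O * x
  | S m' => hpoly c m' x + c m * x ^ S m
  end.

Fixpoint hpoly_deriv (c : nat -> R) (m : nat) (x : R) : R :=
  match m with
  | O => c O
  | S m' => hpoly_deriv c m' x + INR (S m) * c m * x ^ m
  end.

Lemma hpoly_ext c d m x : (forall k, (k <= m)%nat -> c k = d k) ->
  hpoly c m x = hpoly d m x.
Proof.
  induction m as [|m IH]; intro H; simpl.
  - rewrite H by lia. reflexivity.
  - rewrite IH by (intros; apply H; lia). rewrite H by lia. reflexivity.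
Qed.

Lemma sum_n_m_hpoly c m x :
  sum_n_m (fun i => c (i - 1)%nat * x ^ i) 1 (S m) = hpoly c m x.
Proof.
  induction m as [|m IH].
  - rewrite sum_n_n. simpl. ring.
  - rewrite sum_n_Sm, IH by lia. unfold plus; simpl.
    replace (m - 0)%nat with m by lia. reflexivity.
Qed.

Lemma is_derive_hpoly_comp c m f t df : is_derive f t df ->
  is_derive (fun y => hpoly c m (f y)) t (hpoly_deriv c m (f t) * df).
Proof.
  intro Hf. induction m as [|m IH]; cbn [hpoly hpoly_deriv].
  - apply is_derive_scal. exact Hf.
  - assert (Hpow := is_derive_scal _ _ (c (S m)) _ (is_derive_pow _ (S (S m)) _ _ Hf)).
    assert (Hsum := is_derive_plus _ _ _ _ _ IH Hpow).
    unfold plus in Hsum; cbn [Init.Nat.pred] in Hsum.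
    match goal with |- is_derive _ _ ?v => replace v with
      (hpoly_deriv c m (f t) * df + c (S m) * (INR (S (S m)) * df * f t ^ S m)) by ring end.
    exact Hsum.
Qed.

Lemma hpoly_shift c n lam x m :
  hpoly (fun k => (INR n + lam * INR (k + 1)) * c k - lam * INR k * c (k - 1)%nat) m x =
  INR n * hpoly c m x + lam * (x - x ^ 2) * hpoly_deriv c m x
  + lam * INR (m + 1) * c m * x ^ (m + 2).
Proof.
  induction m as [|m IH].
  - simpl. ring.
  - cbn [hpoly]. rewrite IH. cbn [hpoly hpoly_deriv].
    replace (S m - 1)%nat with m by lia.
    replace (m + 2)%nat with (S (S m)) by lia.
    replace (S m + 2)%nat with (S (S (S m))) by lia.
    rewrite !plus_INR, !S_INR. simpl. ring.
Qed.

Lemma nsum_ext k : forall b f g,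
  (forall l, length l = k -> (lsum l <= b)%nat -> f l = g l) ->
  nsum k b f = nsum k b g.
Proof.
  induction k as [|k IH]; intros b f g H; simpl.
  - apply H; simpl; lia.
  - apply sum_n_ext_loc. intros i Hi. apply IH. intros l Hl Hs.
    apply H; simpl; lia.
Qed.

Lemma nsum_scal_l k : forall b c f,
  nsum k b (fun l => c * f l) = c * nsum k b f.
Proof.
  induction k as [|k IH]; intros b c f; simpl; [reflexivity|].
  rewrite <- (sum_n_mult_l c). apply sum_n_ext. intro i. apply IH.
Qed.

Lemma prod1_ext n f g : (forall e, (1 <= e <= n)%nat -> f e = g e) ->
  prod1 n f = prod1 n g.
Proof.
  induction n as [|n IH]; intro H; simpl; [reflexivity|].
  rewrite IH by (intros; apply H; lia). rewrite H by lia. reflexivity.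
Qed.

Lemma ffn_S_shift x n : ffn x (S n) = x * ffn (x - 1) n.
Proof.
  revert x; induction n as [|n IH]; intro x.
  - simpl. ring.
  - change (ffn x (S (S n))) with (ffn x (S n) * (x - INR (S n))).
    rewrite IH, S_INR. simpl. ring.
Qed.

Lemma sum_n_S_shift (u : nat -> R) m :
  sum_n u (S m) = u O + sum_n (fun i => u (S i)) m.
Proof.
  induction m as [|m IH].
  - rewrite sum_Sn, !sum_O. reflexivity.
  - rewrite sum_Sn, IH, (sum_Sn (fun i => u (S i))). unfold plus; simpl. ring.
Qed.

Lemma aterm_cons N j lam i l : length l = j -> (i + 1 <= N)%nat ->
  aterm N (S j) lam (i :: l) =
  ffn (INR N + INR (S j + 1) * lam - 1) i * aterm (N - i - 1) j lam l.
Proof.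
  intros Hl Hi. unfold aterm. cbn [prod1].
  rewrite Nat.sub_diag. simpl nth. simpl firstn. simpl lsum.
  replace (prod1 j _) with (prod1 j (fun ell : nat =>
      ffn (INR (N - i - 1) + INR (ell + 1) * lam - INR (lsum (firstn (j - ell) l))
           - INR (j - ell) - 1) (nth (j - ell) l 0%nat))).
  2:{ apply prod1_ext. intros e He. destruct e as [|e]; [lia|].
      replace (j - e)%nat with (S (j - S e)) by lia.
      simpl nth. simpl firstn. simpl lsum. f_equal.
      replace (S j - S e)%nat with (S (j - S e)) by lia.
      rewrite S_INR, !plus_INR, !minus_INR by lia. rewrite INR_1. ring. }
  replace (INR N + lam - INR (i + lsum l) - INR (S j) - 1) with
     (INR (N - i - 1) + lam - INR (lsum l) - INR j - 1).
  2:{ rewrite ?plus_INR, ?S_INR, !minus_INR by lia. simpl. ring. }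
  replace (Z.of_nat N - Z.of_nat (i + lsum l) - Z.of_nat (S j) - 1)%Z with
     (Z.of_nat (N - i - 1) - Z.of_nat (lsum l) - Z.of_nat j - 1)%Z by lia.
  rewrite INR_0, !Rminus_0_r. ring.
Qed.

Definition asum lam j N := nsum j (N - j) (aterm N j lam).

Lemma asum_S_l lam j N : (S j <= N)%nat ->
  asum lam (S j) N =
  sum_n (fun i => ffn (INR N + INR (S j + 1) * lam - 1) i * asum lam j (N - i - 1)) (N - S j).
Proof.
  intro H. unfold asum. simpl nsum. apply sum_n_ext_loc. intros i Hi.
  rewrite <- nsum_scal_l. replace (N - S j - i)%nat with (N - i - 1 - j)%nat by lia.
  apply nsum_ext. intros l Hl Hs. apply aterm_cons; lia.
Qed.

Lemma asum_S_r lam k N : (1 <= k <= N)%nat ->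
  asum lam k (S N) = (INR N + INR (k + 1) * lam) * asum lam k N + asum lam (k - 1) N.
Proof.
  intro H. destruct k as [|j]; [lia|].
  rewrite !asum_S_l by lia.
  replace (S N - S j)%nat with (S (N - S j)) by lia.
  rewrite sum_n_S_shift. simpl ffn at 1.
  replace (S N - 0 - 1)%nat with N by lia.
  replace (S j - 1)%nat with j by lia.
  rewrite <- (sum_n_mult_l (INR N + INR (S j + 1) * lam)).
  rewrite Rmult_1_l, Rplus_comm. f_equal.
  apply sum_n_ext. intro i. rewrite ffn_S_shift.
  replace (S N - S i - 1)%nat with (N - i - 1)%nat by lia.
  rewrite S_INR. set (q := INR (S j + 1)). unfold mult; simpl.
  replace (INR N + 1 + q * lam - 1 - 1) with (INR N + q * lam - 1) by ring.
  ring.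
Qed.

(** At [N = j] the only summand has all indices 0 and ends with [(λ - 1)_(-1) = 1/λ]. *)
Lemma asum_diag lam n : lam <> 0 -> asum lam n n = / lam.
Proof.
  intro Hl. induction n as [|n IH].
  - unfold asum, aterm, ffz. simpl.
    replace (0 + lam - 0 - 0 - 1 + 1) with lam by ring. ring.
  - rewrite asum_S_l by lia. replace (S n - S n)%nat with O by lia.
    rewrite sum_O. replace (S n - 0 - 1)%nat with n by lia.
    rewrite IH. simpl. ring.
Qed.

Lemma asum_0 lam N : (1 <= N)%nat -> asum lam 0 N = ffn (INR N + lam - 1) (N - 1).
Proof.
  intro H. unfold asum, aterm, ffz. simpl nsum. simpl prod1.
  replace (Z.of_nat N - 0 - 0 - 1 <? 0)%Z with false
    by (symmetry; apply Z.ltb_ge; lia).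
  replace (Z.to_nat (Z.of_nat N - 0 - 0 - 1)) with (N - 1)%nat by lia.
  rewrite Rmult_1_l. f_equal; ring.
Qed.

Lemma asum_0_S lam N : lam <> 0 -> asum lam 0 (S N) = (INR N + lam) * asum lam 0 N.
Proof.
  intro Hl. destruct N as [|N].
  - rewrite asum_0, asum_diag by (auto || lia). simpl. field. exact Hl.
  - rewrite !asum_0 by lia.
    replace (S (S N) - 1)%nat with (S (S N - 1)) by lia.
    rewrite ffn_S_shift, !S_INR. f_equal; [ring | f_equal; ring].
Qed.

Definition coef lam N k :=
  if (k <=? N)%nat then (-1) ^ k * INR (fact k) * lam ^ k * asum lam k N else 0.

Lemma coef_S lam N k : lam <> 0 -> (k <= S N)%nat ->
  coef lam (S N) k =
  (INR N + lam * INR (k + 1)) * coef lam N k - lam * INR k * coef lam N (k - 1).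
Proof.
  intros Hl Hk. unfold coef.
  replace (k <=? S N)%nat with true by (symmetry; apply Nat.leb_le; lia).
  destruct k as [|k].
  - rewrite asum_0_S by exact Hl. simpl. ring.
  - replace (S k - 1)%nat with k by lia.
    replace (k <=? N)%nat with true by (symmetry; apply Nat.leb_le; lia).
    rewrite fact_simpl, mult_INR.
    destruct (Nat.eq_dec k N) as [->|Hne].
    + replace (S N <=? N)%nat with false by (symmetry; apply Nat.leb_gt; lia).
      rewrite !asum_diag, S_INR by exact Hl. simpl pow. field. exact Hl.
    + replace (S k <=? N)%nat with true by (symmetry; apply Nat.leb_le; lia).
      rewrite asum_S_r by lia. replace (S k - 1)%nat with k by lia.
      rewrite !plus_INR. simpl. ring.
Qed.

Lemma hpoly_coef_S lam N x : lam <> 0 ->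
  hpoly (coef lam (S N)) (S N) x =
  INR N * hpoly (coef lam N) N x + lam * (x - x ^ 2) * hpoly_deriv (coef lam N) N x.
Proof.
  intro Hl.
  rewrite (hpoly_ext _ (fun k => (INR N + lam * INR (k + 1)) * coef lam N k
                                 - lam * INR k * coef lam N (k - 1)%nat))
    by (intros; apply coef_S; auto).
  rewrite hpoly_shift.
  assert (Hout : coef lam N (S N) = 0).
  { unfold coef. replace (S N <=? N)%nat with false by (symmetry; apply Nat.leb_gt; lia).
    reflexivity. }
  simpl hpoly; simpl hpoly_deriv. rewrite Hout. ring.
Qed.

Lemma Derive_n_F_hpoly lam N t : lam <> 0 -> -1 < t ->
  Derive_n (F lam) N t = (-1) ^ N * lam * (/ (1 + t)) ^ N * hpoly (coef lam N) N (F lam t).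
Proof.
  intro Hl. revert t. induction N as [|N IH]; intros t Ht.
  - unfold coef. simpl. rewrite asum_diag by exact Hl. field. exact Hl.
  - simpl Derive_n at 1. apply is_derive_unique.
    apply (is_derive_ext_loc
      (fun y => (-1) ^ N * lam * (/ (1 + y)) ^ N * hpoly (coef lam N) N (F lam y))).
    { assert (Hr : 0 < t + 1) by lra. exists (mkposreal _ Hr). intros y Hy.
      unfold ball in Hy; simpl in Hy.
      unfold AbsRing_ball, abs, minus, plus, opp in Hy; simpl in Hy.
      apply Rabs_lt_between in Hy. symmetry. apply IH. lra. }
    assert (Hpre := is_derive_scal _ _ ((-1) ^ N * lam) _ (is_derive_inv_pow N t Ht)).
    assert (Hpoly := is_derive_hpoly_comp (coef lam N) N _ _ _ (is_derive_F lam t Ht)).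
    assert (Hprod := is_derive_mult _ _ _ _ _ Hpre Hpoly ltac:(intros; apply Rmult_comm)).
    unfold plus, mult in Hprod; simpl in Hprod.
    match goal with |- is_derive _ _ ?v => replace v with
      ((-1) ^ N * lam * (- INR N * (/ (1 + t)) ^ S N) * hpoly (coef lam N) N (F lam t)
       + (-1) ^ N * lam * (/ (1 + t)) ^ N
         * (hpoly_deriv (coef lam N) N (F lam t)
            * (- lam / (1 + t) * (F lam t - F lam t ^ 2)))) end.
    + exact Hprod.
    + rewrite hpoly_coef_S by exact Hl. simpl pow. field. lra.
Qed.

Lemma a_coef lam N k : lam <> 0 -> (1 <= N)%nat -> (k <= N)%nat ->
  a k N lam = coef lam N k.
Proof.
  intros Hl HN Hk. unfold a, coef.
  replace (k <=? N)%nat with true by (symmetry; apply Nat.leb_le; lia).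
  destruct (Nat.eqb_spec k 0) as [->|H0].
  - rewrite asum_0 by exact HN. simpl. ring.
  - destruct (Nat.eqb_spec k N) as [->|H1].
    + rewrite asum_diag by exact Hl. destruct N as [|n]; [lia|].
      replace (S n - 1)%nat with n by lia. simpl pow. field. exact Hl.
    + unfold asum. ring.
Qed.

Theorem theorem2 (lam : R) (Hlam : lam <> 0) (N : nat) (HN : (1 <= N)%nat)
  (t : R) (Ht : -1 < t) :
  Derive_n (F lam) N t =
  (-1) ^ N * lam / (1 + t) ^ N *
  sum_n_m (fun i => a (i - 1) N lam * F lam t ^ i) 1 (N + 1).
Proof.
  rewrite Derive_n_F_hpoly by assumption.
  replace (N + 1)%nat with (S N) by lia.
  rewrite (sum_n_m_hpoly (fun k => a k N lam)).
  rewrite (hpoly_ext (fun k => a k N lam) (coef lam N)) by (intros; apply a_coef; assumption).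
  rewrite pow_inv. unfold Rdiv. ring.
Qed.
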